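(* Let $\overrightarrow{W}$ be a Morse sequence on a simplicial complex $K$. Then $\overline\Phi_p=\widetilde\curlywedge_p\circ\curlywedge_p$ and $\underline\Phi_p=\widetilde\curlyvee_p\circ\curlyvee_p$ as maps $K[p]\to K[p]$, for every $p$.
   Context: A simplicial complex $K$ is a finite collection of non-empty finite sets closed under taking non-empty subsets; $\dim\sigma=|\sigma|-1$, $K^{(p)}$ the set of $p$-simplices. A pair $(\sigma,\tau)$ with $\sigma\subsetneq\tau$ is a free pair for $K$ if $\tau$ is the only simplex other than $\sigma$ containing $\sigma$; $K$ is then an elementary expansion of $K\setminus\{\sigma,\tau\}$. If $\nu$ is a facet (maximal simplex) of $K$, $K$ is an elementary filling of $K\setminus\{\nu\}$. A Morse sequence on $K$ is a sequence $\langle\emptyset=K_0,\dots,K_k=K\rangle$ with each $K_i$ an elementary expansion or filling of $K_{i-1}$; simplices added by fillings are critical; for an expansion $K_i=K_{i-1}\cup\{\sigma,\tau\}$, $\sigma\subset\tau$, $(\sigma,\tau)$ is a regular pair, $\sigma$ lower regular, $\tau$ upper regular. $\widehat W$ is the set of critical simplices. $K[p]$ is the $\mathbb{Z}_2$-vector space of subsets of $K^{(p)}$ (sum = symmetric difference, $0=\emptyset$), $\widehat W[p]=\{c\in K[p]:c\subseteq\widehat W\}$. For $\sigma\in K^{(p)}$, $\partial(\sigma)=\{\tau\in K^{(p-1)}:\tau\subset\sigma\}$, $\delta(\sigma)=\{\tau\in K^{(p+1)}:\sigma\subset\tau\}$, with linear extensions $\partial_p,\delta_p$. The reference map $\curlywedge$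 is the unique map assigning to each $p$-simplex an element of $\widehat W[p]$, with linear extension $\curlywedge_p$, such that $\curlywedge(\nu)=\{\nu\}$ for critical $\nu$ and $\curlywedge(\tau)=0=\curlywedge(\partial(\tau))$ for upper regular $\tau$; the coreference map $\curlyvee$ (linear extension $\curlyvee_p$) is the unique such map with $\curlyvee(\nu)=\{\nu\}$ for critical $\nu$ and $\curlyvee(\sigma)=0=\curlyvee(\delta(\sigma))$ for lower regular $\sigma$. Extension maps: $\widetilde\curlywedge_p,\widetilde\curlyvee_p:\widehat W[p]\to K[p]$ linear with $\widetilde\curlywedge(\kappa)=\{\nu\in K:\kappa\in\curlyvee(\nu)\}$, $\widetilde\curlyvee(\kappa)=\{\nu\in K:\kappa\in\curlywedge(\nu)\}$ for critical $\kappa$. Let $V_p:K[p]\to K[p+1]$ and $V^*_p:K[p]\to K[p-1]$ be the linear maps with $V(\kappa)=V^*(\kappa)=0$ for critical $\kappa$, and $V(\sigma)=\tau$, $V(\tau)=0$, $V^*(\sigma)=0$, $V^*(\tau)=\sigma$ for each regular pair $(\sigma,\tau)$. The gradient flow $\Phi_p:K[p]\to K[p]$ and coflow $\Phi^*_p:K[p]\to K[p]$ are the linear maps with $\Phi_p(\nu)=\nu+\partial_{p+1}(V_p(\nu))+V_{p-1}(\partial_p(\nu))$ and $\Phi^*_p(\nu)=\nu+\delta_{p-1}(V^*_p(\nu))+V^*_{p+1}(\delta_p(\nu))$ for $\nu\in K^{(p)}$. For each $c\in K[p]$ there are integers $i,j\ge0$ with $\Phi^{i+1}(c)=\Phi^i(c)$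 and $(\Phi^* )^{j+1}(c)=(\Phi^* )^j(c)$; one sets $\overline\Phi_p(c)=\Phi^i(c)$ and $\underline\Phi_p(c)=(\Phi^* )^j(c)$. *)

From mathcomp Require Import all_boot.
Set Implicit Arguments. Unset Strict Implicit. Unset Printing Implicit Defensive.

Section MorseDefs.
Variable V : finType.

Definition simplex := {set V}.
Definition cplx_t := {set {set V}}.

Definition is_complex (K : cplx_t) : Prop :=
  set0 \notin K /\
  (forall s t : {set V}, t \in K -> s \subset t -> s != set0 -> s \in K).

(* p-simplices: dim = |s| - 1 = p *)
Definition Kp (K : cplx_t) (p : nat) : cplx_t := [set s in K | #|s| == p.+1].

Definition free_pair (K : cplx_t) (s t : {set V}) : Prop :=
  [/\ s \in K, t \in K, s \proper t &
      forall r, r \in K -> s \subset r -> r != s -> r = t].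

Definition facet (K : cplx_t) (n : {set V}) : Prop :=
  n \in K /\ forall r, r \in K -> n \subset r -> r = n.

(* a step of a Morse sequence: inl n = filling by the critical simplex n,
   inr (s, t) = elementary expansion by the regular pair (s, t) *)
Definition step := ({set V} + ({set V} * {set V}))%type.

Definition added (x : step) : cplx_t :=
  match x with inl n => [set n] | inr (s, t) => [set s; t] end.

Definition cplx_of (w : seq step) : cplx_t := \bigcup_(x <- w) added x.

Definition valid_step (Kprev : cplx_t) (x : step) : Prop :=
  is_complex (Kprev :|: added x) /\
  match x with
  | inl n => n \notin Kprev /\ facet (Kprev :|: added x) n
  | inr (s, t) => [/\ s \notin Kprev, t \notin Kprev &
                     free_pair (Kprev :|: added x) s t]
  end.

Fixpoint valid_from (Kprev : cplx_t) (w : seq step) : Prop :=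
  match w with
  | [::] => True
  | x :: w' => valid_step Kprev x /\ valid_from (Kprev :|: added x) w'
  end.

Definition morse_seq (K : cplx_t) (w : seq step) : Prop :=
  valid_from set0 w /\ cplx_of w = K.

Definition crit (w : seq step) : cplx_t := [set n | inl n \in w].

(* Z_2-linear extension of a map on simplices to chains (sets of simplices) *)
Definition lin (f : {set V} -> cplx_t) (c : cplx_t) : cplx_t :=
  [set y | odd #|[set x in c | y \in f x]|].

Definition sdiff (A B : cplx_t) : cplx_t := (A :\: B) :|: (B :\: A).

Definition bd (K : cplx_t) (n : {set V}) : cplx_t :=
  [set t in K | (t \subset n) && (#|t|.+1 == #|n|)].
Definition cobd (K : cplx_t) (n : {set V}) : cplx_t :=
  [set t in K | (n \subset t) && (#|t| == #|n|.+1)].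

Definition Vm (w : seq step) (n : {set V}) : cplx_t := [set t | inr (n, t) \in w].
Definition Vs (w : seq step) (n : {set V}) : cplx_t := [set s | inr (s, n) \in w].

Definition Phi (K : cplx_t) (w : seq step) : cplx_t -> cplx_t :=
  lin (fun n => sdiff (sdiff [set n] (lin (bd K) (Vm w n))) (lin (Vm w) (bd K n))).
Definition Phis (K : cplx_t) (w : seq step) : cplx_t -> cplx_t :=
  lin (fun n => sdiff (sdiff [set n] (lin (cobd K) (Vs w n))) (lin (Vs w) (cobd K n))).

Definition is_reference (K : cplx_t) (w : seq step) (f : {set V} -> cplx_t) : Prop :=
  [/\ forall n, n \in K -> f n \subset [set k in crit w | #|k| == #|n|],
      forall n, n \in crit w -> f n = [set n] &
      forall s t, inr (s, t) \in w -> f t = set0 /\ lin f (bd K t) = set0].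

Definition is_coreference (K : cplx_t) (w : seq step) (g : {set V} -> cplx_t) : Prop :=
  [/\ forall n, n \in K -> g n \subset [set k in crit w | #|k| == #|n|],
      forall n, n \in crit w -> g n = [set n] &
      forall s t, inr (s, t) \in w -> g s = set0 /\ lin g (cobd K s) = set0].

Definition ext (K : cplx_t) (h : {set V} -> cplx_t) (k : {set V}) : cplx_t :=
  [set n in K | k \in h n].

(* "F-bar(c) = d": the iterates of F on c stabilise (some i with
   F^{i+1} c = F^i c), and F^i c = d for every such i *)
Definition stable_limit (F : cplx_t -> cplx_t) (c d : cplx_t) : Prop :=
  (exists i, iter i.+1 F c = iter i F c) /\
  (forall i, iter i.+1 F c = iter i F c -> iter i F c = d).

End MorseDefs.

(* Over Z_2, write the matrix of the gradient flow restricted to K as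
   A = P + N, where P projects onto the critical simplices.  Ordering the
   simplices by the step of the Morse sequence that adds them, N strictly
   decreases this order, so it is nilpotent, and it sends critical and upper
   regular simplices to upper regular ones, which P kills: P N^(a+1) P = 0.
   Expanding (P + N)^k then gives A^k = B P B for all large k, where
   B = (1 - N)^-1.  The reference map has a matrix F with F A = F and F P = P,
   which forces F = P B; the coflow has matrix A^T, so the coreference map has
   matrix G = P B^T, and G^T F = B P B is the matrix of the extension of g
   composed with f.  Transposing everything gives the statement for the
   coflow. *)

From mathcomp Require Import all_boot all_algebra zify.
Set Implicit Arguments. Unset Strict Implicit. Unset Printing Implicit Defensive.
Import GRing.Theory.

Section IdempotentPlusNilpotent.
Variable R : pzRingType.
Local Open Scope ring_scope.
Implicit Types N P F : R.

Definition geom N t := \sum_(i < t) N ^+ i.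

Lemma geomS N t : geom N t.+1 = 1 + N * geom N t.
Proof.
rewrite /geom big_ord_recl expr0 mulr_sumr; congr (_ + _).
by apply: eq_bigr => i _; rewrite lift0 exprS.
Qed.

Lemma geom_nilpotent N m t : N ^+ m = 0 -> (m <= t)%N -> geom N t = geom N m.
Proof.
move=> Nm /subnKC <-; rewrite /geom big_split_ord /= [X in _ + X]big1 ?addr0 // => i _.
by rewrite exprD Nm mul0r.
Qed.

Lemma mulr_subr1_geom N m : N ^+ m = 0 -> (1 - N) * geom N m = 1.
Proof. by move=> Nm; rewrite -opprB mulNr -subrX1 Nm sub0r opprK. Qed.

Lemma idem_add_nil_fixed P N m F :
  N ^+ m = 0 -> F * (P + N) = F -> F * P = P -> F = P * geom N m.
Proof.
move=> Nm FA FP; have FN : F * (1 - N) = P.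
  by rewrite mulrBr mulr1 -{1}FA mulrDr FP addrK.
by rewrite -[F]mulr1 -(mulr_subr1_geom Nm) mulrA FN.
Qed.

Variables (P N : R) (m : nat).
Hypotheses (PP : P * P = P) (PNP : forall a, P * N ^+ a.+1 * P = 0).

Lemma idem_geom_idem t : P * geom N t.+1 * P = P.
Proof.
rewrite geomS mulrDr mulr1 mulrDl PP /geom !mulr_sumr mulr_suml big1 ?addr0 //.
by move=> i _; rewrite -exprS PNP.
Qed.

Lemma idem_add_nil_geom t : (P + N) * geom N t.+1 * P = geom N t.+2 * P.
Proof. by rewrite [geom N t.+2]geomS !mulrDl mul1r idem_geom_idem. Qed.

Lemma expr_idem_add_nil k :
  (P + N) ^+ k = \sum_(j < k) geom N (k - j) * P * N ^+ j + N ^+ k.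
Proof.
elim: k => [|k IH]; first by rewrite big_ord0 add0r !expr0.
rewrite exprS IH mulrDr mulr_sumr big_ord_recr /= -addrA; congr (_ + _).
  apply: eq_bigr => j _; have /subnSK jk := ltn_ord j.
  by rewrite !mulrA -[in LHS]jk idem_add_nil_geom subSn ?jk // ltnW.
by rewrite subSnn /geom big_ord1 expr0 mul1r mulrDl exprS.
Qed.

Lemma expr_idem_add_nil_stable k :
  N ^+ m = 0 -> (m + m <= k)%N -> (P + N) ^+ k = geom N m * P * geom N m.
Proof.
move=> Nm mmk; have mk : (m <= k)%N by lia.
have Nnil j : (m <= j)%N -> N ^+ j = 0 by move/subnKC <-; rewrite exprD Nm mul0r.
have -> : geom N m * P * geom N m = \sum_(j < m) geom N m * P * N ^+ j.
  by rewrite -mulr_sumr.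
rewrite expr_idem_add_nil Nnil // addr0.
rewrite (big_ord_widen k (fun j => geom N m * P * N ^+ j) mk) [RHS]big_mkcond /=.
apply: eq_bigr => j _; case: ifP => [jm|/negbT]; last first.
  by rewrite -leqNgt => /Nnil ->; rewrite mulr0.
by rewrite (geom_nilpotent Nm) //; lia.
Qed.
End IdempotentPlusNilpotent.

Section MatrixLimit.
Variables (R : comPzRingType) (n : nat).
Local Open Scope ring_scope.
Implicit Types A P N F G : 'M[R]_n.

Lemma trmxX A k : (A ^+ k)^T = A^T ^+ k.
Proof.
elim: k => [|k IH]; first by rewrite !expr0 trmx1.
by rewrite exprS -mulmxE trmx_mul IH mulmxE -exprSr.
Qed.

Lemma trmx_geom N t : (geom N t)^T = geom N^T t.
Proof. by rewrite /geom raddf_sum; apply: eq_bigr => i _; exact: trmxX. Qed.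

Lemma mulmx_neq0 (M1 M2 : 'M[R]_n) i j :
  (M1 * M2) i j != 0 -> exists k, M1 i k != 0 /\ M2 k j != 0.
Proof.
rewrite -mulmxE mxE => nz.
have [k /andP[? ?]|none] := pickP (fun k => (M1 i k != 0) && (M2 k j != 0)).
  by exists k.
move: nz; rewrite big1 ?eqxx // => k _.
by have /negbT/nandP[/negPn/eqP->|/negPn/eqP->] := none k; rewrite (mul0r, mulr0).
Qed.

Lemma mx_ranked_nilpotent (M : 'M[R]_n) (r : 'I_n -> nat) b :
  (forall i j, M i j != 0 -> (r i < r j)%N) -> (forall i, (r i <= b)%N) ->
  M ^+ b.+1 = 0.
Proof.
move=> Mr rb; have rank_pow a i j : (M ^+ a) i j != 0 -> (r i + a <= r j)%N.
  elim: a i j => [|a IH] i j.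
    rewrite expr0 mxE addn0; have [-> //|ne] := eqVneq i j.
    by rewrite eqxx.
  by rewrite exprS => /mulmx_neq0[k [/Mr rik /IH rkj]]; rewrite addnS; lia.
apply/matrixP => i j; rewrite mxE; apply/eqP; apply: contraT => /rank_pow.
have := rb j; lia.
Qed.

Lemma expr_mx_limit A P N F G m k :
    A = P + N -> P^T = P -> P * P = P -> (forall a, P * N ^+ a.+1 * P = 0) ->
    N ^+ m = 0 -> F * A = F -> F * P = P -> G * A^T = G -> G * P = P ->
  (m + m <= k)%N -> A ^+ k = G^T * F.
Proof.
move=> -> Psym PP PNP Nm FA FP GA GP mmk.
have NTm : N^T ^+ m = 0 by rewrite -trmxX Nm trmx0.
have ATE : (P + N)^T = P + N^T by rewrite linearD /= Psym.
rewrite ATE in GA.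
rewrite (expr_idem_add_nil_stable PP PNP Nm mmk) (idem_add_nil_fixed Nm FA FP).
rewrite (idem_add_nil_fixed NTm GA GP) -mulmxE trmx_mul trmx_geom trmxK Psym.
by rewrite !mulmxE mulrA -[_ * P * P]mulrA PP.
Qed.
End MatrixLimit.

Section Chains.
Variable V : finType.
Local Notation X := {set V}.
Local Notation n := #|{: X}|.
Local Open Scope ring_scope.
Implicit Types (F D U h : X -> {set X}) (c K : {set X}).

Definition chain_mx F : 'M['F_2]_n :=
  \matrix_(i, j) (enum_val i \in F (enum_val j))%:R.
Definition chain_col c : 'cV['F_2]_n := \col_i (enum_val i \in c)%:R.

(* Chains are indexed by all of {set V}; restricting a map to K makes every
   set outside K a zero column. *)
Definition restrict K F x := if x \in K then F x else set0.

Definition gflow D U x := sdiff (sdiff [set x] (lin D (U x))) (lin U (D x)).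

Lemma F2_natr_odd k : ((odd k)%:R : 'F_2) = k%:R.
Proof. by rewrite -modn2 (Fp_nat_mod (p := 2)). Qed.

Lemma F2_natr_addb (a b : bool) : ((a (+) b)%:R : 'F_2) = a%:R + b%:R.
Proof. by case: a; case: b => //=; rewrite ?addr0 ?add0r //; apply/eqP. Qed.

Lemma F2_natr_inj (a b : bool) : (a%:R : 'F_2) = b%:R -> a = b.
Proof. by case: a; case: b => // /eqP. Qed.

Lemma chain_mx_neq0 F i j : (chain_mx F i j != 0) = (enum_val i \in F (enum_val j)).
Proof. by rewrite mxE; case: (_ \in _); rewrite ?oner_eq0 ?eqxx. Qed.

Lemma in_sdiff (A B : {set X}) y : (y \in sdiff A B) = (y \in A) (+) (y \in B).
Proof. by rewrite /sdiff !inE; case: (y \in A); case: (y \in B). Qed.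

Lemma mem_lin F c y : (y \in lin F c) = odd #|[set x in c | y \in F x]|.
Proof. by rewrite inE. Qed.

Lemma natr_mem_lin F c y :
  ((y \in lin F c)%:R : 'F_2) = \sum_x (y \in F x)%:R * (x \in c)%:R.
Proof.
rewrite mem_lin F2_natr_odd -sum1_card natr_sum big_mkcond /=.
apply: eq_bigr => x _; rewrite inE.
by case: (x \in c); case: (y \in F x); rewrite /= ?mulr1 ?mulr0.
Qed.

Lemma sum_enum_val (h : X -> 'F_2) : \sum_(j < n) h (enum_val j) = \sum_x h x.
Proof. by rewrite -(big_enum_val (A := X)); apply: eq_bigl. Qed.

Lemma chain_col_lin F c : chain_col (lin F c) = chain_mx F *m chain_col c.
Proof.
apply/colP => i; rewrite !mxE natr_mem_lin -sum_enum_val.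
by apply: eq_bigr => j _; rewrite !mxE.
Qed.

Lemma chain_mx_mul F G : chain_mx F *m chain_mx G = chain_mx (fun x => lin F (G x)).
Proof.
apply/matrixP => i j; rewrite !mxE natr_mem_lin -sum_enum_val.
by apply: eq_bigr => k _; rewrite !mxE.
Qed.

Lemma chain_col_inj : injective chain_col.
Proof.
move=> c d cd; apply/setP => x.
have := congr1 (fun v : 'cV_n => v (enum_rank x) 0) cd.
by rewrite !mxE enum_rankK => /F2_natr_inj.
Qed.

Lemma eq_chain_mx F G : F =1 G -> chain_mx F = chain_mx G.
Proof. by move=> FG; apply/matrixP => i j; rewrite !mxE FG. Qed.

Lemma chain_mx_sdiff F G :
  chain_mx (fun x => sdiff (F x) (G x)) = chain_mx F + chain_mx G.
Proof. by apply/matrixP => i j; rewrite !mxE in_sdiff F2_natr_addb. Qed.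

Lemma chain_col_sdiff c d : chain_col (sdiff c d) = chain_col c + chain_col d.
Proof. by apply/colP => i; rewrite !mxE in_sdiff F2_natr_addb. Qed.

Lemma tr_chain_mx F : (chain_mx F)^T = chain_mx (fun y => [set x | y \in F x]).
Proof. by apply/matrixP => i j; rewrite !mxE inE. Qed.

Lemma lin_comp F G c : lin F (lin G c) = lin (fun x => lin F (G x)) c.
Proof. by apply: chain_col_inj; rewrite !chain_col_lin mulmxA chain_mx_mul. Qed.

Lemma lin_sdiff F c d : lin F (sdiff c d) = sdiff (lin F c) (lin F d).
Proof.
by apply: chain_col_inj; rewrite chain_col_lin !chain_col_sdiff mulmxDr !chain_col_lin.
Qed.

Lemma lin_set1 F x : lin F [set x] = F x.
Proof.
apply/setP => y; rewrite mem_lin.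
have -> : [set z in [set x] | y \in F z] = if y \in F x then [set x] else set0.
  apply/setP => z; rewrite inE in_set1; have [->|ne] := eqVneq z x;
  by case: (y \in F x); rewrite ?inE ?eqxx ?(negbTE ne).
by case: (y \in F x); rewrite ?cards1 ?cards0.
Qed.

Lemma eq_in_lin F G c : {in c, F =1 G} -> lin F c = lin G c.
Proof.
move=> FG; apply/setP => y; rewrite !mem_lin; congr (odd _); apply: eq_card => x.
by rewrite !inE; case xc: (x \in c); rewrite //= FG.
Qed.

Lemma lin_eq0 F c : {in c, forall x, F x = set0} -> lin F c = set0.
Proof.
move=> F0; rewrite (eq_in_lin F0); apply/setP => y; rewrite mem_lin inE.
by rewrite (_ : [set _ in c | _] = set0) ?cards0 //; apply/setP => x; rewrite !inE andbF.
Qed.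

Lemma lin0 F : lin F set0 = set0.
Proof. by apply: lin_eq0 => x; rewrite inE. Qed.

Lemma mem_linP F c y : y \in lin F c -> exists2 x, x \in c & y \in F x.
Proof.
rewrite mem_lin; have [->|[x]] := set_0Vmem [set x in c | y \in F x].
  by rewrite cards0.
by rewrite inE => /andP[xc yFx] _; exists x.
Qed.

Lemma sdiffs0 c : sdiff c set0 = c.
Proof. by apply/setP => y; rewrite in_sdiff inE addbF. Qed.

Lemma lin_sub F c K : (forall x, F x \subset K) -> lin F c \subset K.
Proof. by move=> FK; apply/subsetP => y /mem_linP[x _ /(subsetP (FK x))]. Qed.

Lemma sdiff_subU c d : sdiff c d \subset c :|: d.
Proof. by rewrite /sdiff setUSS ?subsetDl. Qed.

Lemma gflow_sub D U K x : x \in K ->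
  (forall z, D z \subset K) -> (forall z, U z \subset K) -> gflow D U x \subset K.
Proof.
move=> xK DK UK; apply: subset_trans (sdiff_subU _ _) _.
rewrite subUset lin_sub // andbT; apply: subset_trans (sdiff_subU _ _) _.
by rewrite subUset sub1set xK lin_sub.
Qed.

Lemma lin_gflow h D U x :
    (forall z t, t \in U z -> h t = set0 /\ lin h (D t) = set0) ->
  lin h (gflow D U x) = h x.
Proof.
move=> hU; have Uh0 z := lin_eq0 (fun t tUz => (hU z t tUz).1).
rewrite /gflow !lin_sdiff lin_set1 !lin_comp (lin_eq0 (fun z _ => Uh0 z)).
by rewrite lin_eq0 ?sdiffs0 // => t /hU[].
Qed.

Lemma restrict_chain_mx_fixed K h D U :
    (forall x, x \in K -> gflow D U x \subset K) ->
    (forall z t, t \in U z -> h t = set0 /\ lin h (D t) = set0) ->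
  chain_mx (restrict K h) * chain_mx (restrict K (gflow D U)) = chain_mx (restrict K h).
Proof.
move=> flowK hU; rewrite -mulmxE chain_mx_mul; apply: eq_chain_mx => x.
rewrite {2 3}/restrict; case: ifP => xK; last exact: lin0.
rewrite -(lin_gflow x hU); apply: eq_in_lin => y /(subsetP (flowK x xK)) yK.
by rewrite /restrict yK.
Qed.

Lemma lin_restrict K h c : c \subset K -> lin h c = lin (restrict K h) c.
Proof. by move=> cK; apply: eq_in_lin => x xc; rewrite /restrict (subsetP cK x xc). Qed.

Lemma ext_chain_mx K h : chain_mx (ext K h) = (chain_mx (restrict K h))^T.
Proof.
rewrite tr_chain_mx; apply: eq_chain_mx => y; apply/setP => x.
by rewrite !inE /restrict; case: (x \in K); rewrite ?inE.
Qed.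

Lemma iter_lin_chain_col K h c k :
    (forall x, x \in K -> h x \subset K) -> c \subset K ->
  iter k (lin h) c \subset K /\
  chain_col (iter k (lin h) c) = chain_mx (restrict K h) ^+ k *m chain_col c.
Proof.
move=> hK cK; elim: k => [|k [iterK IH]]; first by rewrite expr0 mul1mx.
rewrite /= (lin_restrict h iterK); split.
  by apply: lin_sub => x; rewrite /restrict; case: ifP => [/hK|_]; rewrite ?sub0set.
by rewrite chain_col_lin IH mulmxA mulmxE -exprS.
Qed.

Lemma stable_limit_lin K h (M : 'M['F_2]_n) c d k0 :
    (forall x, x \in K -> h x \subset K) -> c \subset K ->
    (forall k, (k0 <= k)%N -> chain_mx (restrict K h) ^+ k = M) ->
    chain_col d = M *m chain_col c ->
  stable_limit (lin h) c d.
Proof.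
move=> hK cK powM dM; have iterE k := (iter_lin_chain_col k hK cK).2.
split; first by exists k0; apply: chain_col_inj; rewrite !iterE !powM.
move=> i fixi; have iter_stable j : iter (j + i) (lin h) c = iter i (lin h) c.
  by elim: j => // j IH; rewrite addSn /= IH.
by apply: chain_col_inj; rewrite -(iter_stable k0) iterE powM ?leq_addr.
Qed.
End Chains.

Section MorseSequence.
Variable V : finType.
Local Notation X := {set V}.

Lemma cplx_ofP (s : seq (step V)) x :
  reflect (exists2 st : step V, st \in s & x \in added st) (x \in cplx_of s).
Proof. by rewrite /cplx_of bigcup_seq; apply: (iffP bigcupP). Qed.

Definition step0 : step V := inl set0.

Lemma valid_from_nth K0 w : valid_from K0 w -> forall i, (i < size w)%N ->
  valid_step (K0 :|: cplx_of (take i w)) (nth step0 w i).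
Proof.
elim: w K0 => [//|x w IH] K0 /= [x_ok w_ok] [|i] /= iw.
  by rewrite /cplx_of big_nil setU0.
by have := IH _ w_ok i iw; rewrite /cplx_of big_cons setUA.
Qed.

Variables (K : {set X}) (w : seq (step V)).
Hypotheses (HK : is_complex K) (Hw : morse_seq K w).

Definition step_index x := find (fun st => x \in added st) w.

Lemma valid_step_nth i : (i < size w)%N ->
  valid_step (cplx_of (take i w)) (nth step0 w i).
Proof. by move=> iw; have := valid_from_nth Hw.1 iw; rewrite set0U. Qed.

Lemma added_notin_prefix i x : (i < size w)%N ->
  x \in added (nth step0 w i) -> x \notin cplx_of (take i w).
Proof.
move=> iw; have [_] := valid_step_nth iw; case: (nth step0 w i) => [c|[s t]] /=.
  by move=> [cnew _]; rewrite inE => /eqP->.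
by move=> [snew tnew _]; rewrite !inE => /orP[]/eqP->.
Qed.

Lemma added_in_prefix j i x : (j < i)%N -> (i < size w)%N ->
  x \in added (nth step0 w j) -> x \in cplx_of (take i w).
Proof.
move=> ji iw xj; apply/cplx_ofP; exists (nth step0 w j) => //.
have jw := ltn_trans ji iw.
by rewrite in_take ?mem_nth // (leq_ltn_trans (index_nth _ jw)).
Qed.

Lemma mem_prefix i x : x \in cplx_of (take i w) ->
  exists2 j, (j < i)%N & x \in added (nth step0 w j).
Proof.
move=> /cplx_ofP[st sti xst]; exists (index st w); first exact: index_ltn.
by rewrite nth_index // (mem_take sti).
Qed.

Lemma step_index_nth i x : (i < size w)%N ->
  x \in added (nth step0 w i) -> step_index x = i.
Proof.
move=> iw xi; have xw : has (fun st => x \in added st) w.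
  by apply/(has_nthP step0); exists i.
case: (ltngtP (step_index x) i) => // [lt|gt].
  have := added_in_prefix lt iw (nth_find step0 xw).
  by rewrite (negbTE (added_notin_prefix iw xi)).
by have := before_find step0 gt; rewrite xi.
Qed.

Lemma step_index_mem st x : st \in w -> x \in added st -> step_index x = index st w.
Proof. by move=> stw xst; apply: step_index_nth; rewrite ?index_mem ?nth_index. Qed.

Lemma added_in_cplx st x : st \in w -> x \in added st -> x \in K.
Proof. by move=> stw xst; rewrite -Hw.2; apply/cplx_ofP; exists st. Qed.

Lemma step_index_added x : x \in K ->
  (step_index x < size w)%N /\ x \in added (nth step0 w (step_index x)).
Proof.
move=> xK; have /cplx_ofP[st stw xst] : x \in cplx_of w by rewrite Hw.2.
have xw : has (fun st : step V => x \in added st) w by apply/hasP; exists st.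
by split; [rewrite /step_index -has_find | exact: (nth_find step0 xw)].
Qed.

Lemma eq_step_added st1 st2 x : st1 \in w -> st2 \in w ->
  x \in added st1 -> x \in added st2 -> st1 = st2.
Proof.
move=> st1w st2w x1 x2.
rewrite -(nth_index step0 st1w) -(nth_index step0 st2w).
by rewrite -(step_index_mem st1w x1) -(step_index_mem st2w x2).
Qed.

Lemma face_step_index (x z : X) : x \in K -> z \subset x -> z != set0 ->
  step_index z < step_index x \/ z \in added (nth step0 w (step_index x)).
Proof.
move=> xK zx z0; have [xi xst] := step_index_added xK.
have [[_ closed] _] := valid_step_nth xi.
have xnew : x \in cplx_of (take (step_index x) w) :|: added (nth step0 w (step_index x)).
  by rewrite inE xst orbT.
have /setUP[/mem_prefix[j ji zj]|] := closed _ _ xnew zx z0; last by right.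
by left; rewrite (step_index_nth _ zj) // (ltn_trans ji xi).
Qed.

Lemma regular_pair s t : inr (s, t) \in w ->
  [/\ s \in K, t \in K, s \subset t & #|t| = #|s|.+1].
Proof.
move=> stw; have [sK tK] : s \in K /\ t \in K.
  by split; apply: added_in_cplx stw _; rewrite !inE eqxx ?orbT.
have iw : (index (inr (s, t)) w < size w)%N by rewrite index_mem.
have := valid_step_nth iw; rewrite nth_index //.
move=> -[[_ closed] [_ _ [_ tK' /properP[st [v vt vs]] free]]].
have vst : v |: s = t.
  apply: free; last by apply/eqP => /setP/(_ v); rewrite !inE eqxx (negbTE vs).
    apply: closed tK' _ _; first by rewrite subUset sub1set vt.
    by apply/set0Pn; exists v; rewrite !inE eqxx.
  exact: subsetUr.
by split; rewrite // -vst cardsU1 vs.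
Qed.

Lemma bd_step_index x z : x \in K -> z \in bd K x ->
  (step_index z < step_index x)%N \/ inr (z, x) \in w.
Proof.
move=> xK; rewrite inE => /and3P[zK zx /eqP zcard].
have z0 : z != set0 by apply: contraTneq zK => ->; case: HK.
have [lt|] := face_step_index xK zx z0; first by left.
have [xi] := step_index_added xK; move: (mem_nth step0 xi).
case: (nth step0 w (step_index x)) => [c|[s t]] stw /=.
  by rewrite !inE => /eqP xc /eqP zc; move: zcard; rewrite xc zc; lia.
have [_ _ _ tcard] := regular_pair stw.
rewrite !inE => /orP[]/eqP xE /orP[]/eqP zE; rewrite xE zE in zcard *; try lia.
by right.
Qed.

Definition upper x := [exists s, inr (s, x) \in w].
Definition lower x := [exists t, inr (x, t) \in w].

Lemma lower_uniq s t t' : inr (s, t) \in w -> inr (s, t') \in w -> t = t'.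
Proof.
move=> st st'; have := eq_step_added st st' (x := s).
by rewrite !inE eqxx => /(_ isT isT) [].
Qed.

Lemma upper_uniq s s' t : inr (s, t) \in w -> inr (s', t) \in w -> s = s'.
Proof.
move=> st st'; have := eq_step_added st st' (x := t).
by rewrite !inE eqxx !orbT => /(_ isT isT) [].
Qed.

Lemma crit_not_lower x : x \in crit w -> ~~ lower x.
Proof.
rewrite inE => xc; apply/existsP => -[t xt].
by have := eq_step_added xc xt (x := x); rewrite !inE eqxx => /(_ isT isT).
Qed.

Lemma crit_not_upper x : x \in crit w -> ~~ upper x.
Proof.
rewrite inE => xc; apply/existsP => -[s sx].
by have := eq_step_added xc sx (x := x); rewrite !inE eqxx orbT => /(_ isT isT).
Qed.

Lemma upper_not_lower x : upper x -> ~~ lower x.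
Proof.
case/existsP => s sx; apply/existsP => -[t xt].
have [_ _ _ xcard] := regular_pair sx.
have := eq_step_added sx xt (x := x); rewrite !inE eqxx orbT => /(_ isT isT) [sE _].
by move: xcard; rewrite sE; lia.
Qed.

Lemma step_cases x : x \in K -> [\/ x \in crit w, lower x | upper x].
Proof.
move=> xK; have [xi] := step_index_added xK; move: (mem_nth step0 xi).
case: (nth step0 w (step_index x)) => [c|[s t]] stw /=.
  by rewrite inE => /eqP->; apply: Or31; rewrite inE.
rewrite !inE => /orP[]/eqP->; [apply: Or32 | apply: Or33]; apply/existsP.
  by exists t.
by exists s.
Qed.

Lemma Vm_lower x t : inr (x, t) \in w -> Vm w x = [set t].
Proof.
by move=> xt; apply/setP => t'; rewrite !inE; apply/idP/eqP => [/(lower_uniq xt)|->].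
Qed.

Lemma Vm_not_lower x : ~~ lower x -> Vm w x = set0.
Proof.
move=> xnl; apply/setP => t; rewrite !inE.
by apply: contraNF xnl => xt; apply/existsP; exists t.
Qed.

Lemma Vm_bd x y : x \in K -> y \in lin (Vm w) (bd K x) ->
  upper y /\ ((step_index y < step_index x)%N \/ y = x).
Proof.
move=> xK /mem_linP[z zbd]; rewrite inE => zy.
split; first by apply/existsP; exists z.
have <- : step_index z = step_index y.
  by rewrite (step_index_mem zy) ?(step_index_mem zy (x := y)) // !inE eqxx ?orbT.
by case: (bd_step_index xK zbd) => [|zx]; [left | right; apply: lower_uniq zy zx].
Qed.

Definition flow := gflow (bd K) (Vm w).
Definition coflow := gflow (cobd K) (Vs w).
Definition crit_proj x := if x \in crit w then [set x] else set0.
Definition flow_nil x := sdiff (restrict K flow x) (crit_proj x).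

Lemma crit_in x : x \in crit w -> x \in K.
Proof. by rewrite inE => xc; apply: added_in_cplx xc _; rewrite inE. Qed.

Lemma upper_in x : upper x -> x \in K.
Proof. by case/existsP => s /regular_pair[]. Qed.

Lemma flow_sub x : x \in K -> flow x \subset K.
Proof.
move=> xK; apply: gflow_sub => // z; apply/subsetP => y; rewrite inE.
  by case/andP.
by case/regular_pair.
Qed.

Lemma coflow_sub x : x \in K -> coflow x \subset K.
Proof.
move=> xK; apply: gflow_sub => // z; apply/subsetP => y; rewrite inE.
  by case/andP.
by case/regular_pair.
Qed.

Lemma upper_mem_Vm_bd x : upper x -> x \in lin (Vm w) (bd K x).
Proof.
case/existsP => s sx; have [sK _ sx_sub xcard] := regular_pair sx.
rewrite mem_lin (_ : [set z in bd K x | x \in Vm w z] = [set s]) ?cards1 //.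
apply/setP => z; rewrite !inE; apply/idP/eqP => [/andP[_ zx]|->].
  by apply: upper_uniq zx sx.
by rewrite sK sx_sub xcard eqxx sx.
Qed.

Lemma flow_nil_crit x : x \in crit w -> flow_nil x = lin (Vm w) (bd K x).
Proof.
move=> xc; rewrite /flow_nil /restrict /crit_proj (crit_in xc) xc /flow /gflow.
rewrite Vm_not_lower ?crit_not_lower // lin0 sdiffs0.
by apply/setP => y; rewrite !in_sdiff addbAC addbb.
Qed.

Lemma flow_nil_upper x : upper x -> flow_nil x = lin (Vm w) (bd K x) :\ x.
Proof.
move=> xup; have xnc : x \notin crit w := contraTN (@crit_not_upper x) xup.
rewrite /flow_nil /restrict /crit_proj (upper_in xup) (negbTE xnc) sdiffs0.
rewrite /flow /gflow (Vm_not_lower (upper_not_lower xup)) lin0 sdiffs0.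
apply/setP => y; rewrite in_sdiff in_setD1 in_set1.
by have [->|] := eqVneq y x; rewrite ?upper_mem_Vm_bd.
Qed.

Lemma flow_nil_lower x t : inr (x, t) \in w ->
  flow_nil x = sdiff (bd K t :\ x) (lin (Vm w) (bd K x)).
Proof.
move=> xt; have [xK _ xt_sub tcard] := regular_pair xt.
have xl : lower x by apply/existsP; exists t.
have xnc : x \notin crit w := contraTN (@crit_not_lower x) xl.
have xnL : x \notin lin (Vm w) (bd K x).
  by apply: contraTN xl => /(Vm_bd xK)[xup _]; apply: upper_not_lower.
have xbd : x \in bd K t by rewrite inE xK xt_sub tcard eqxx.
rewrite /flow_nil /restrict /crit_proj xK (negbTE xnc) sdiffs0.
rewrite /flow /gflow (Vm_lower xt) lin_set1.
apply/setP => y; rewrite !in_sdiff in_setD1 in_set1.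
by have [->|] := eqVneq y x; rewrite ?xbd ?(negbTE xnL).
Qed.

Lemma flow_nil_out x : x \notin K -> flow_nil x = set0.
Proof.
move=> xnK; rewrite /flow_nil /restrict /crit_proj (negbTE xnK).
by rewrite ifN ?sdiffs0 //; apply: contra xnK; apply: crit_in.
Qed.

Lemma flow_nil_step_index x y : y \in flow_nil x -> (step_index y < step_index x)%N.
Proof.
have [xK|/flow_nil_out->] := boolP (x \in K); last by rewrite inE.
case: (step_cases xK) => [xc|/existsP[t xt]|xup].
- rewrite flow_nil_crit // => /(Vm_bd xK)[yup [//|yx]].
  by move: yup; rewrite yx (negbTE (crit_not_upper xc)).
- have xl : lower x by apply/existsP; exists t.
  rewrite (flow_nil_lower xt) in_sdiff in_setD1.
  case yL: (y \in lin _ _).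
    have [yup [//|yx]] := Vm_bd xK yL.
    by move: xl; rewrite -yx (negbTE (upper_not_lower yup)).
  rewrite addbF => /andP[yx ybd]; have [_ tK _ _] := regular_pair xt.
  have -> : step_index x = step_index t.
    by rewrite (step_index_mem xt) ?(step_index_mem xt (x := t)) // !inE eqxx ?orbT.
  case: (bd_step_index tK ybd) => // yt.
  by move: yx; rewrite (upper_uniq yt xt) eqxx.
- rewrite flow_nil_upper // in_setD1 => /andP[yx /(Vm_bd xK)[_ [//|yE]]].
  by move: yx; rewrite yE eqxx.
Qed.

Lemma upper_of_flow_nil x y : y \in flow_nil x -> ~~ lower x -> upper y.
Proof.
move=> yN xnl; have [xK|xnK] := boolP (x \in K); last first.
  by move: yN; rewrite flow_nil_out // inE.
case: (step_cases xK) => [xc|xl|xup].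
- by move: yN; rewrite flow_nil_crit // => /(Vm_bd xK)[].
- by rewrite xl in xnl.
- by move: yN; rewrite flow_nil_upper // => /setD1P[_ /(Vm_bd xK)[]].
Qed.

Lemma coflowE x y : x \in K -> y \in K -> (y \in coflow x) = (x \in flow y).
Proof.
move=> xK yK; rewrite !in_sdiff !in_set1 eq_sym addbAC; congr (_ (+) _ (+) _).
  rewrite !mem_lin; congr (odd _); apply: eq_card => t; rewrite !inE.
  case yt: (inr (y, t) \in w); rewrite ?andbF //=.
  by have [_ tK _ _] := regular_pair yt; rewrite tK xK eq_sym andbT.
rewrite !mem_lin; congr (odd _); apply: eq_card => s; rewrite !inE.
case sx: (inr (s, x) \in w); rewrite ?andbF //=.
by have [sK _ _ _] := regular_pair sx; rewrite sK yK eq_sym andbT.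
Qed.

Lemma in_crit_proj x y : (y \in crit_proj x) = (x \in crit w) && (y == x).
Proof. by rewrite /crit_proj; case: ifP; rewrite ?inE. Qed.

Section FlowMatrices.
Local Open Scope ring_scope.
Local Notation P := (chain_mx crit_proj).
Local Notation N := (chain_mx flow_nil).
Local Notation A := (chain_mx (restrict K flow)).

Lemma flow_mx_split : A = P + N.
Proof.
rewrite -chain_mx_sdiff; apply: eq_chain_mx => x; apply/setP => y.
by rewrite /flow_nil !in_sdiff addbCA addbb addbF.
Qed.

Lemma crit_proj_mx_sym : P^T = P.
Proof.
rewrite tr_chain_mx; apply: eq_chain_mx => y; apply/setP => x.
by rewrite inE !in_crit_proj eq_sym; have [->|] := eqVneq x y; rewrite ?andbF.
Qed.

Lemma crit_proj_mx_idem : P * P = P.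
Proof.
rewrite -mulmxE chain_mx_mul; apply: eq_chain_mx => x.
by rewrite {2 3}/crit_proj; case: ifP => xc; rewrite ?lin0 // lin_set1 /crit_proj xc.
Qed.

Lemma flow_nil_mx_nilpotent : N ^+ (size w).+1 = 0.
Proof.
apply: (mx_ranked_nilpotent (r := fun i => step_index (enum_val i))) => [i j|i].
  by rewrite chain_mx_neq0 => /flow_nil_step_index.
exact: find_size.
Qed.

Lemma flow_nil_mx_upper a i j : (N ^+ a.+1 * P) i j != 0 -> upper (enum_val i).
Proof.
elim: a i j => [|a IH] i j.
  rewrite expr1 => /mulmx_neq0[k []]; rewrite !chain_mx_neq0 in_crit_proj.
  move=> ik /andP[jc /eqP kj]; apply: upper_of_flow_nil ik _.
  by rewrite kj crit_not_lower.
rewrite exprS -mulrA => /mulmx_neq0[k []]; rewrite chain_mx_neq0 => ik /IH kup.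
exact: upper_of_flow_nil ik (upper_not_lower kup).
Qed.

Lemma crit_flow_nil_crit a : P * N ^+ a.+1 * P = 0.
Proof.
apply/matrixP => i j; rewrite [RHS]mxE; apply/eqP; apply: contraT.
rewrite -mulrA => /mulmx_neq0[k []]; rewrite chain_mx_neq0 in_crit_proj.
by case/andP=> kc _ /flow_nil_mx_upper; rewrite (negbTE (crit_not_upper kc)).
Qed.

Lemma restrict_crit_proj h : (forall x, x \in crit w -> h x = [set x]) ->
  chain_mx (restrict K h) * P = P.
Proof.
move=> hc; rewrite -mulmxE chain_mx_mul; apply: eq_chain_mx => x.
rewrite /crit_proj; case: ifP => xc; last exact: lin0.
by rewrite lin_set1 /restrict (crit_in xc) hc.
Qed.

Lemma coflow_mx_tr : chain_mx (restrict K coflow) = A^T.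
Proof.
rewrite tr_chain_mx; apply: eq_chain_mx => x; apply/setP => y; rewrite inE /restrict.
have [xK|xnK] := boolP (x \in K); have [yK|ynK] := boolP (y \in K); rewrite ?in_set0 //.
- exact: coflowE.
- by apply/negbTE; apply: contra ynK; apply: (subsetP (coflow_sub xK)).
- by apply/esym/negbTE; apply: contra xnK; apply: (subsetP (flow_sub yK)).
Qed.

Variables f g : X -> {set X}.
Hypotheses (Hf : is_reference K w f) (Hg : is_coreference K w g).

Lemma reference_flow_fixed : chain_mx (restrict K f) * A = chain_mx (restrict K f).
Proof.
apply: restrict_chain_mx_fixed flow_sub _ => z t; rewrite inE.
by case: Hf => _ _; apply.
Qed.

Lemma coreference_coflow_fixed : chain_mx (restrict K g) * A^T = chain_mx (restrict K g).
Proof.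
rewrite -coflow_mx_tr.
apply: restrict_chain_mx_fixed coflow_sub _ => z s; rewrite inE.
by case: Hg => _ _; apply.
Qed.

Lemma flow_mx_expr k : ((size w).+1 + (size w).+1 <= k)%N ->
  A ^+ k = (chain_mx (restrict K g))^T * chain_mx (restrict K f).
Proof.
apply: (expr_mx_limit flow_mx_split crit_proj_mx_sym crit_proj_mx_idem
          crit_flow_nil_crit flow_nil_mx_nilpotent reference_flow_fixed _
          coreference_coflow_fixed).
  by apply: restrict_crit_proj; case: Hf.
by apply: restrict_crit_proj; case: Hg.
Qed.

Lemma coflow_mx_expr k : ((size w).+1 + (size w).+1 <= k)%N ->
  chain_mx (restrict K coflow) ^+ k =
    (chain_mx (restrict K f))^T * chain_mx (restrict K g).
Proof.
by move=> k_big; rewrite coflow_mx_tr -trmxX flow_mx_expr // -mulmxE trmx_mul trmxK.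
Qed.
End FlowMatrices.
End MorseSequence.

Theorem theorem13 (V : finType) (K : {set {set V}}) (w : seq (step V))
    (f g : {set V} -> {set {set V}}) :
  is_complex K -> morse_seq K w ->
  is_reference K w f -> is_coreference K w g ->
  forall (p : nat) (c : {set {set V}}), c \subset Kp K p ->
    stable_limit (Phi K w) c (lin (ext K g) (lin f c)) /\
    stable_limit (Phis K w) c (lin (ext K f) (lin g c)).
Proof.
move=> HK Hw Hf Hg p c cKp.
have cK : c \subset K.
  by apply: subset_trans cKp _; apply/subsetP => x; rewrite inE => /andP[].
split.
  apply: (stable_limit_lin (flow_sub Hw) cK (flow_mx_expr HK Hw Hf Hg)).
  by rewrite chain_col_lin ext_chain_mx (lin_restrict f cK) chain_col_lin mulmxA.
apply: (stable_limit_lin (coflow_sub Hw) cK (coflow_mx_expr HK Hw Hf Hg)).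
by rewrite chain_col_lin ext_chain_mx (lin_restrict g cK) chain_col_lin mulmxA.
Qed.
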